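(* Let $H$ be a connected graph with $k=|V(H)|>1$ vertices that does not contain two false twins. Then no deterministic online algorithm (without advice) solving the Delayed Connected $H$-Node-Deletion Problem has competitive ratio smaller than $k$.
   Context: All graphs are finite, simple and undirected. Two distinct vertices are false twins if they have the same open neighborhood (in particular they are non-adjacent). An induced copy of $H$ in $G$ is an induced subgraph isomorphic to $H$; $G$ is $H$-free if it has none. An online graph $G$ has vertices $v_1,\dots,v_n$ revealed one at a time (with edges to earlier vertices); $G_t=G[\{v_1,\dots,v_t\}]$. Delayed Connected $H$-Node-Deletion Problem (for a fixed connected $H$): an online algorithm must choose sets $S_1\subseteq\dots\subseteq S_n$ with $S_t\subseteq V(G_t)$ and $G_t-S_t$ $H$-free for each $t$, where $S_t$ depends only on $G_t$; the cost is $|S_n|$. $\mathrm{OPT}(G)$ is the minimum size of $S\subseteq V(G)$ with $G-S$ $H$-free. An algorithm is $c$-competitive if there is a constant $\alpha\ge0$ with cost $\le c\cdot \mathrm{OPT}(G)+\alpha$ for every online graph $G$; its competitive ratio is the infimum of such $c\ge1$. *)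

From mathcomp Require Import all_boot.
From Stdlib Require Import Reals.

Set Implicit Arguments.
Unset Strict Implicit.
Unset Printing Implicit Defensive.

(* An online graph: vertices v_1,...,v_n are the naturals 0,...,n-1
   (vertex i is the (i+1)-th revealed vertex); its edges are given by a
   symmetric irreflexive relation e on nat (only pairs below n matter).
   G_t is the induced subgraph on {0,...,t-1}. *)
Definition online_graph (e : rel nat) : Prop := symmetric e /\ irreflexive e.

Definition induced_copy (V : finType) (hadj : rel V)
  (t : nat) (e : rel nat) (S : pred nat) : Prop :=
  exists f : V -> nat,
    injective f /\
    (forall x, f x < t /\ ~~ S (f x)) /\
    (forall x y, hadj x y = e (f x) (f y)).

Definition H_free (V : finType) (hadj : rel V)
  (t : nat) (e : rel nat) (S : pred nat) : Prop :=
  ~ induced_copy hadj t e S.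

Definition same_prefix (t : nat) (e e' : rel nat) : Prop :=
  forall i j, i < t -> j < t -> e i j = e' i j.

(* A deterministic online algorithm: given t and the online graph, it outputs
   S_t; S_t may only depend on G_t. *)
Definition online_algorithm := nat -> rel nat -> pred nat.

Definition valid_algorithm (V : finType) (hadj : rel V)
  (A : online_algorithm) : Prop :=
  (forall t e e', online_graph e -> online_graph e' -> same_prefix t e e' ->
     A t e =1 A t e') /\
  (forall t e, online_graph e -> forall i, A t e i -> i < t) /\
  (forall t e, online_graph e -> forall i, A t e i -> A t.+1 e i) /\
  (forall t e, online_graph e -> H_free hadj t e (A t e)).

Definition card_below (S : pred nat) (n : nat) : nat := count S (iota 0 n).

Definition cost (A : online_algorithm) (n : nat) (e : rel nat) : nat :=
  card_below (A n e) n.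

Definition feasible (V : finType) (hadj : rel V) (n : nat) (e : rel nat)
  (S : pred nat) : Prop :=
  (forall i, S i -> i < n) /\ H_free hadj n e S.

Definition is_OPT (V : finType) (hadj : rel V) (n : nat) (e : rel nat)
  (m : nat) : Prop :=
  (exists S, feasible hadj n e S /\ card_below S n = m) /\
  (forall S, feasible hadj n e S -> m <= card_below S n).

Definition c_competitive (V : finType) (hadj : rel V) (A : online_algorithm)
  (c : R) : Prop :=
  exists alpha : R, (0 <= alpha)%R /\
    forall n e m, online_graph e -> is_OPT hadj n e m ->
      (INR (cost A n e) <= c * INR m + alpha)%R.

(* The adversary reveals a blow-up of H: every new vertex v_t is an
   independent copy of some vertex w of H, chosen so that all earlier copies
   of w have already been deleted.  Such a w always exists, for otherwise the
   surviving vertices would contain one copy of each vertex of H, hence an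
   induced copy of H.  So at every time at most k = |V(H)| vertices survive,
   and the algorithm pays at least n - k.  Offline, deleting all copies of
   the least frequent vertex of H costs at most n / k and is feasible:
   without false twins, an induced copy of H inside a blow-up of H must use
   one copy of every vertex of H.  Letting n grow, the ratio tends to k. *)
From mathcomp Require Import all_boot.
From Stdlib Require Import Reals Lra Classical Wf_nat.
From mathcomp Require Import zify.
Set Implicit Arguments.
Unset Strict Implicit.

Lemma is_OPT_exists (V : finType) (hadj : rel V) n e S :
  feasible hadj n e S -> exists m, is_OPT hadj n e m.
Proof.
move=> feasS.
pose P m := exists S, feasible hadj n e S /\ card_below S n = m.
have [m [[Pm minm] _]] : has_unique_least_element le P.
  apply: dec_inh_nat_subset_has_unique_least_element; last by exists (card_below S n), S.
  by move=> m; apply: classic.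
by exists m; split=> // S' feasS'; apply/leP/minm; exists S'.
Qed.

Section BlowUp.

Variables (V : finType) (hadj : rel V).
Hypotheses (hadj_sym : symmetric hadj) (hadj_irr : irreflexive hadj).

(* The vertex [i] of the blow-up is a copy of [cls i]; copies of the same
   vertex are non-adjacent, since [hadj] is irreflexive. *)
Definition blowup (cls : nat -> V) : rel nat := fun i j => hadj (cls i) (cls j).

Lemma online_graph_blowup cls : online_graph (blowup cls).
Proof. by split=> [i j | i]; rewrite /blowup (hadj_sym, hadj_irr). Qed.

Definition fully_deleted t (cls : nat -> V) (S : pred nat) (w : V) : bool :=
  [forall i : 'I_t, (cls i == w) ==> S i].

Lemma induced_copy_blowup t cls S :
  (forall w, ~~ fully_deleted t cls S w) -> induced_copy hadj t (blowup cls) S.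
Proof.
move=> survivor.
have rep w : exists i : 'I_t, (cls i == w) && ~~ S i.
  by have /forallPn[i] := survivor w; rewrite negb_imply; exists i.
pose f w := val (xchoose (rep w)).
have f_spec w : [/\ f w < t, cls (f w) = w & ~~ S (f w)].
  by have /andP[/eqP clsw notS] := xchooseP (rep w); split; rewrite /f ?ltn_ord.
exists f; split; last split.
- by move=> a b fab; case: (f_spec a) => _ <- _; case: (f_spec b) => _ <- _; rewrite fab.
- by move=> w; case: (f_spec w).
- by move=> a b; rewrite /blowup; case: (f_spec a) => _ -> _; case: (f_spec b) => _ -> _.
Qed.

Hypothesis no_false_twins : forall x y, (forall z, hadj x z = hadj y z) -> x = y.

Definition copies_below (cls : nat -> V) n (w : V) : pred nat :=
  fun i => (i < n) && (cls i == w).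

Lemma feasible_copies_below cls n w :
  feasible hadj n (blowup cls) (copies_below cls n w).
Proof.
split=> [i /andP[] // | [f [_ [f_ok f_adj]]]].
have cls_f_inj : injective (cls \o f).
  by move=> a b /= clsab; apply: no_false_twins => z; rewrite !f_adj /blowup clsab.
have [g _ fg] := injF_bij cls_f_inj.
have [gw_lt] := f_ok (g w).
by rewrite /copies_below gw_lt /=; have /= -> := fg w; rewrite eqxx.
Qed.

Lemma card_copies_below cls n w :
  card_below (copies_below cls n w) n = count (fun i => cls i == w) (iota 0 n).
Proof. by apply: eq_in_count => i; rewrite mem_iota /copies_below /= => ->. Qed.

Lemma sum_count_class (cls : nat -> V) (s : seq nat) :
  \sum_(w : V) count (fun i => cls i == w) s = size s.
Proof.
elim: s => [|a s IHs] /=; first by rewrite big1.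
rewrite big_split /= IHs (bigD1 (cls a)) //= eqxx big1 // => w /negbTE.
by rewrite eq_sym => ->.
Qed.

Lemma is_OPT_blowup_le cls n m :
  is_OPT hadj n (blowup cls) m -> #|V| * m <= n.
Proof.
move=> [_ minm].
rewrite -[leqRHS](size_iota 0) -(sum_count_class cls) -sum_nat_const.
apply: leq_sum => w _; rewrite -card_copies_below.
exact/minm/feasible_copies_below.
Qed.

End BlowUp.

Section Adversary.

Variables (V : finType) (hadj : rel V).
Hypotheses (hadj_sym : symmetric hadj) (hadj_irr : irreflexive hadj).
Variable A : online_algorithm.
Hypothesis A_valid : valid_algorithm hadj A.
Variable x0 : V.

Definition next_class (l : seq V) : V :=
  odflt x0 [pick w | fully_deleted (size l) (nth x0 l) (A (size l) (blowup hadj (nth x0 l))) w].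

Lemma fully_deleted_next_class l :
  fully_deleted (size l) (nth x0 l) (A (size l) (blowup hadj (nth x0 l))) (next_class l).
Proof.
rewrite /next_class; case: pickP => [w // | none_deleted].
have [_ [_ [_ A_free]]] := A_valid.
exfalso; apply: (A_free (size l) _ (online_graph_blowup hadj_sym hadj_irr (nth x0 l))).
by apply: induced_copy_blowup => w; rewrite none_deleted.
Qed.

Fixpoint adversary_prefix n : seq V :=
  if n is m.+1 then rcons (adversary_prefix m) (next_class (adversary_prefix m)) else [::].

Definition adversary_class i := next_class (adversary_prefix i).

Definition adversary_graph : rel nat := blowup hadj adversary_class.

Lemma size_adversary_prefix n : size (adversary_prefix n) = n.
Proof. by elim: n => //= n IHn; rewrite size_rcons IHn. Qed.

Lemma nth_adversary_prefix n i : i < n -> nth x0 (adversary_prefix n) i = adversary_class i.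
Proof.
elim: n => // n IHn ltin /=; rewrite nth_rcons size_adversary_prefix.
by have [/IHn // | gtin | ->] := ltngtP i n; first lia.
Qed.

Lemma A_adversary_prefix t :
  A t (blowup hadj (nth x0 (adversary_prefix t))) =1 A t adversary_graph.
Proof.
have [A_local _] := A_valid; apply: A_local; try exact: online_graph_blowup.
by move=> i j lti ltj; rewrite /blowup !nth_adversary_prefix.
Qed.

Lemma A_adversary_mono t t' i : t <= t' -> A t adversary_graph i -> A t' adversary_graph i.
Proof.
move=> /subnK <-; elim: (t' - t) => // d IHd /IHd.
have [_ [_ [A_mono _]]] := A_valid; rewrite addSn.
exact/A_mono/online_graph_blowup.
Qed.

Lemma A_deletes_earlier_copy i j t :
  i < j -> j <= t -> adversary_class i = adversary_class j -> A t adversary_graph i.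
Proof.
move=> ltij lejt clsij; apply: (A_adversary_mono lejt); rewrite -A_adversary_prefix.
have := fully_deleted_next_class (adversary_prefix j).
rewrite size_adversary_prefix => /forallP/(_ (Ordinal ltij)) /=.
by rewrite nth_adversary_prefix // clsij eqxx.
Qed.

Lemma cost_adversary_lower t : t - #|V| <= cost A t adversary_graph.
Proof.
rewrite /cost /card_below.
have := count_predC (A t adversary_graph) (iota 0 t).
rewrite size_iota -(size_filter (predC _)); set survivors := filter _ _ => split_t.
suff : size survivors <= #|V| by lia.
have uniq_cls : uniq (map adversary_class survivors).
  rewrite map_inj_in_uniq ?filter_uniq ?iota_uniq // => i j.
  rewrite !mem_filter !mem_iota /= => /andP[Ai ltit] /andP[Aj ltjt] clsij.
  have [ltij | ltji | //] := ltngtP i j.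
    by rewrite (A_deletes_earlier_copy ltij (ltnW ltjt) clsij) in Ai.
  by rewrite (A_deletes_earlier_copy ltji (ltnW ltit) (esym clsij)) in Aj.
by rewrite -(size_map adversary_class) -(card_uniqP uniq_cls) max_card.
Qed.

End Adversary.

Lemma ratio_gap_exists (K c alpha : R) :
  (0 <= c)%R -> (c < K)%R -> (0 <= alpha)%R ->
  exists n : nat, forall cost m : nat,
    (INR n <= INR cost + K)%R -> (K * INR m <= INR n)%R ->
    ~ (INR cost <= c * INR m + alpha)%R.
Proof.
move=> c_ge0 ltcK alpha_ge0.
have [n gap] := INR_archimed (K - c) (K * (K + alpha)) (Rgt_minus _ _ ltcK).
exists n => cost m costn optn bound.
(* K n - K^2 <= K cost <= c K m + K alpha <= c n + K alpha contradicts the choice of n. *)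
have m_ge0 := pos_INR m.
nra.
Qed.

Theorem mainTheorem4 (V : finType) (hadj : rel V) :
  symmetric hadj -> irreflexive hadj ->
  1 < #|V| ->
  (forall x y, connect hadj x y) ->
  (forall x y, (forall z, hadj x z = hadj y z) -> x = y) ->
  forall A : online_algorithm, valid_algorithm hadj A ->
  forall c : R, (1 <= c)%R -> (c < INR #|V|)%R ->
  ~ c_competitive hadj A c.
Proof.
move=> hadj_sym hadj_irr card_gt1 _ no_twins A A_valid c c_ge1 ltck.
move=> [alpha [alpha_ge0 competitive]].
have [x0 _] := card_gt0P (ltnW card_gt1).
have c_ge0 : (0 <= c)%R by lra.
have [n gap] := ratio_gap_exists c_ge0 ltck alpha_ge0.
set e := adversary_graph hadj A x0.
have [m optm] := is_OPT_exists (feasible_copies_below no_twins (adversary_class hadj A x0) n x0).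
have costn : n <= cost A n e + #|V|.
  by have := cost_adversary_lower hadj_sym hadj_irr A_valid x0 n; rewrite -/e; lia.
have optn : #|V| * m <= n := is_OPT_blowup_le no_twins optm.
apply: (gap (cost A n e) m).
- by rewrite -plus_INR; apply/le_INR/leP.
- by rewrite -mult_INR; apply/le_INR/leP.
- exact: competitive (online_graph_blowup hadj_sym hadj_irr _) optm.
Qed.
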